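(* Let $b_{10}>0$, $b_{11}\ge0$, $c_{01}\ge0$, $c_{11}\ge0$, and define $\gamma'=\frac{c_{01}}{b_{10}}$, $\delta'=\frac{b_{10}-b_{11}+c_{11}-c_{01}}{b_{10}}$. Let $\mathcal{F}=\{(P_{11},t): P_{11}\in[0,1],\ P_{11}-1\le t\le P_{11}\}$ and $\mathcal{P}=\{(P_{11},t)\in\mathcal{F}: t>\gamma'+\delta'P_{11}\}$. Then $\mathcal{P}$ contains a pair $(P_{11},t)$ with $t<0$ if and only if $c_{11}<b_{11}-b_{10}$.
   Context: Double binary causal classification: $P_{11}$ is the probability of the positive outcome under the positive treatment, $t=P_{11}-P_{10}$ the estimated individual treatment effect, $b_{ij}$ the benefit of outcome $i$ under treatment $j$ and $c_{ij}$ the cost of outcome $i$ under treatment $j$, normalized so that $c_{00}=c_{10}=0$, $b_{00}=b_{01}=0$. The cost-sensitive causal decision boundary is $t=\gamma'+\delta'P_{11}$ and $\mathcal{P}$ is the positive treatment set. *)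

From Stdlib Require Import Reals.
Open Scope R_scope.

Definition gamma' (b10 c01 : R) : R := c01 / b10.
Definition delta' (b10 b11 c01 c11 : R) : R := (b10 - b11 + c11 - c01) / b10.

Definition feasible (P11 t : R) : Prop :=
  0 <= P11 <= 1 /\ P11 - 1 <= t <= P11.

Definition pos_treat_set (b10 b11 c01 c11 : R) (P11 t : R) : Prop :=
  feasible P11 t /\ t > gamma' b10 c01 + delta' b10 b11 c01 c11 * P11.

(** Multiplying the boundary by [b10 > 0] turns [t > gamma' + delta' P11] into
    [b10 t > c01 (1 - P11) + (b10 - b11 + c11) P11].  For [t < 0] the left side
    is negative while [c01 (1 - P11) >= 0] on the feasible region, so the
    coefficient [b10 - b11 + c11] must be negative.  Conversely, if it equals
    [-m < 0], the points [(1 - e, -e)] lie in the positive treatment set as soon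
    as [e < m / (m + b10 + c01)]. *)

From Stdlib Require Import Reals Lra Psatz.
Open Scope R_scope.

Lemma scaled_threshold (b10 b11 c01 c11 P11 : R) : b10 <> 0 ->
  b10 * (gamma' b10 c01 + delta' b10 b11 c01 c11 * P11)
  = c01 * (1 - P11) + (b10 - b11 + c11) * P11.
Proof. intros hb10; unfold gamma', delta'; field; exact hb10. Qed.

Lemma pos_treat_set_scaled (b10 b11 c01 c11 P11 t : R) : 0 < b10 ->
  pos_treat_set b10 b11 c01 c11 P11 t <->
  feasible P11 t /\ c01 * (1 - P11) + (b10 - b11 + c11) * P11 < b10 * t.
Proof.
  intros hb10; unfold pos_treat_set.
  rewrite <- (scaled_threshold b10 b11 c01 c11 P11) by lra.
  split; intros [hF hlt]; split; try exact hF.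
  - apply Rmult_lt_compat_l; assumption.
  - apply Rmult_lt_reg_l with b10; assumption.
Qed.

Lemma pos_treat_neg_effect_coef_neg (b10 b11 c01 c11 P11 t : R) :
  0 < b10 -> 0 <= c01 ->
  pos_treat_set b10 b11 c01 c11 P11 t -> t < 0 -> b10 - b11 + c11 < 0.
Proof.
  intros hb10 hc01 hP ht.
  apply (pos_treat_set_scaled b10 b11 c01 c11 P11 t hb10) in hP.
  destruct hP as [[[hP0 hP1] _] hlt].
  assert (hc01_part : 0 <= c01 * (1 - P11)) by (apply Rmult_le_pos; lra).
  assert (hscaled_neg : b10 * t < 0) by nra.
  assert (hcoef_part : (b10 - b11 + c11) * P11 < 0) by lra.
  destruct (Rlt_or_le (b10 - b11 + c11) 0) as [hneg | hnneg]; [exact hneg |].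
  assert (0 <= (b10 - b11 + c11) * P11) by (apply Rmult_le_pos; lra).
  lra.
Qed.

Lemma pos_treat_neg_effect_witness (b10 b11 c01 c11 : R) :
  0 < b10 -> 0 <= c01 -> c11 < b11 - b10 ->
  exists P11 t, pos_treat_set b10 b11 c01 c11 P11 t /\ t < 0.
Proof.
  intros hb10 hc01 hc11.
  set (m := b11 - b10 - c11).
  assert (hm : 0 < m) by (unfold m; lra).
  set (e := m / (2 * m + b10 + c01)).
  assert (he_def : e * (2 * m + b10 + c01) = m) by (unfold e; field; lra).
  assert (he0 : 0 < e) by (unfold e; apply Rdiv_lt_0_compat; lra).
  assert (he1 : e < 1) by nra.
  exists (1 - e), (- e); split; [| lra].
  apply pos_treat_set_scaled; [exact hb10 |].
  split; [unfold feasible; lra |].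
  replace (b10 - b11 + c11) with (- m) by (unfold m; ring).
  (* the margin of [(1 - e, -e)] is [m (1 - e) - (b10 + c01) e = e m] *)
  nra.
Qed.

Theorem theorem3 (b10 b11 c01 c11 : R)
  (hb10 : 0 < b10) (hb11 : 0 <= b11) (hc01 : 0 <= c01) (hc11 : 0 <= c11) :
  (exists P11 t : R, pos_treat_set b10 b11 c01 c11 P11 t /\ t < 0)
  <-> c11 < b11 - b10.
Proof.
  split.
  - intros [P11 [t [hP ht]]].
    pose proof (pos_treat_neg_effect_coef_neg b10 b11 c01 c11 P11 t hb10 hc01 hP ht).
    lra.
  - exact (pos_treat_neg_effect_witness b10 b11 c01 c11 hb10 hc01).
Qed.
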